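(* Let $\Pi$ be a finite nonempty set of policies, $\Theta^T$ a finite nonempty set of environment parameterizations, and $U^{\vec\theta}(\pi)\in\mathbb{R}$ the utility of $\pi$ under $\vec\theta$. Then there exists an environment policy $\Lambda:\Pi\to\Delta(\Theta^T)$ such that $$\arg\max_{\pi\in\Pi}\ \mathbb{E}_{\vec\theta\sim\Lambda(\pi)}\big[U^{\vec\theta}(\pi)\big]=\textsc{MinimaxRegret}.$$
   Context: $\Delta(\Theta^T)$ denotes the set of probability distributions on $\Theta^T$. Regret: $\textsc{Regret}(\pi,\vec\theta)=\max_{\pi^B\in\Pi}\{U^{\vec\theta}(\pi^B)-U^{\vec\theta}(\pi)\}$. Minimax regret policies: $\textsc{MinimaxRegret}=\arg\min_{\pi\in\Pi}\max_{\vec\theta\in\Theta^T}\textsc{Regret}(\pi,\vec\theta)$. *)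

From HB Require Import structures.
From mathcomp Require Import all_boot all_order all_algebra.
Set Implicit Arguments. Unset Strict Implicit. Unset Printing Implicit Defensive.
Import Order.TTheory GRing.Theory Num.Theory.
Local Open Scope ring_scope.

Section Defs.
Variable R : realFieldType.

(* maximum of F over a finite type T (value 0 if T is empty; only used for
   nonempty T) *)
Definition fmax (T : finType) (F : T -> R) : R :=
  if [pick x : T] is Some x0 then \big[Num.max/F x0]_(i : T) F i else 0.

Definition is_distr (T : finType) (p : {ffun T -> R}) : Prop :=
  (forall t, 0 <= p t) /\ \sum_(t : T) p t = 1.

Definition expect (T : finType) (p : {ffun T -> R}) (f : T -> R) : R :=
  \sum_(t : T) p t * f t.

Definition is_argmax (T : finType) (F : T -> R) (x : T) : Prop :=
  forall y, F y <= F x.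
Definition is_argmin (T : finType) (F : T -> R) (x : T) : Prop :=
  forall y, F x <= F y.

(* U th pi = U^th(pi) *)
Definition Regret (Pi Theta : finType) (U : Theta -> Pi -> R)
  (pi : Pi) (th : Theta) : R :=
  fmax (fun piB => U th piB) - U th pi.

Definition max_regret (Pi Theta : finType) (U : Theta -> Pi -> R) (pi : Pi) : R :=
  fmax (fun th => Regret U pi th).

Definition MinimaxRegret (Pi Theta : finType) (U : Theta -> Pi -> R) (pi : Pi) : Prop :=
  is_argmin (max_regret U) pi.
End Defs.

From HB Require Import structures.
From mathcomp Require Import all_boot all_order all_algebra.
From mathcomp Require Import ring lra.
Import Order.TTheory GRing.Theory Num.Theory.
Local Open Scope ring_scope.
Set Implicit Arguments. Unset Strict Implicit.

(* The environment plays against each policy pi with a distribution Lambda(pi)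
   chosen so that the expected utility of pi is a prescribed "target" value:
   a common constant c for every minimax-regret policy, and the worst-case
   utility lo(pi) < c for every other policy.  Then the argmax of the expected
   utility is exactly the minimax-regret set. *)

Section Fmax.
Variables (R : realFieldType) (T : finType) (F : T -> R).

Lemma fmax_ge (y : T) : F y <= fmax F.
Proof.
rewrite /fmax; case: pickP => [x0 _|noT]; last by have := noT y.
exact: le_bigmax.
Qed.

Lemma fmax_attained (y : T) : exists x, fmax F = F x.
Proof.
rewrite /fmax; case: pickP => [x0 _|noT]; last by have := noT y.
exists [arg max_(i > x0) F i]%O; case: arg_maxP => // b _ Fb.
by apply/le_anti; rewrite le_bigmax andbT; apply: bigmax_le => [|i _]; exact: Fb.
Qed.

End Fmax.

Section Realization.
Variables (R : realFieldType) (T : finType).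

Definition delta (a : T) : {ffun T -> R} := [ffun t => (t == a)%:R].

Definition mix (l : R) (p q : {ffun T -> R}) : {ffun T -> R} :=
  [ffun t => l * p t + (1 - l) * q t].

Lemma expect_delta (a : T) (f : T -> R) : expect (delta a) f = f a.
Proof.
rewrite /expect (bigD1 a) //= ffunE eqxx mul1r big1 ?addr0 // => t /negbTE ta.
by rewrite ffunE ta mul0r.
Qed.

Lemma expect_mix (l : R) (p q : {ffun T -> R}) (f : T -> R) :
  expect (mix l p q) f = l * expect p f + (1 - l) * expect q f.
Proof.
rewrite /expect !mulr_sumr -big_split /=; apply: eq_bigr => t _.
by rewrite ffunE; ring.
Qed.

Lemma is_distr_expect1 (p : {ffun T -> R}) :
  (forall t, 0 <= p t) -> expect p (fun _ => 1) = 1 -> is_distr p.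
Proof.
move=> p_ge0 p_sum1; split=> //; rewrite -p_sum1 /expect.
by apply: eq_bigr => t _; rewrite mulr1.
Qed.

Lemma is_distr_mix_delta (l : R) (a b : T) :
  0 <= l <= 1 -> is_distr (mix l (delta a) (delta b)).
Proof.
case/andP=> l_ge0 l_le1; apply: is_distr_expect1.
  move=> t; rewrite !ffunE; apply: addr_ge0; apply: mulr_ge0 => //.
  by rewrite subr_ge0.
by rewrite expect_mix !expect_delta; ring.
Qed.

Lemma realize_expectation (f : T -> R) (a b : T) (v : R) :
  f a <= v <= f b -> exists p, is_distr p /\ expect p f = v.
Proof.
case/andP=> fa_v v_fb.
have [fab|fa_fb] := eqVneq (f a) (f b).
  exists (mix 1 (delta a) (delta b)); split; first by apply: is_distr_mix_delta; rewrite ler01 lexx.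
  by rewrite expect_mix !expect_delta fab; apply/le_anti; rewrite -fab; lra.
have gap : 0 < f b - f a by rewrite subr_gt0 lt_neqAle fa_fb (le_trans fa_v v_fb).
pose l := (f b - v) / (f b - f a).
exists (mix l (delta a) (delta b)); split.
  apply: is_distr_mix_delta; rewrite divr_ge0 ?(ltW gap) ?subr_ge0 //=.
  by rewrite ler_pdivrMr // mul1r; lra.
rewrite expect_mix !expect_delta /l; field.
by rewrite subr_eq0 eq_sym.
Qed.

End Realization.

Section RegretComparison.
Variables (R : realFieldType) (Pi Theta : finType) (U : Theta -> Pi -> R).
Variable th0 : Theta.

Definition minimaxb (pi : Pi) : bool :=
  [forall y, max_regret U pi <= max_regret U y].

Lemma minimaxP (pi : Pi) : reflect (MinimaxRegret U pi) (minimaxb pi).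
Proof. by apply: (iffP forallP) => min_pi y; apply: min_pi. Qed.

Lemma minimax_exists (p0 : Pi) : exists m, MinimaxRegret U m.
Proof.
exists [arg min_(m < p0) max_regret U m]%O.
by case: arg_minP => // m _ min_m y; apply: min_m.
Qed.

Definition lo (pi : Pi) : R := - fmax (fun th => - U th pi).
Definition hi (pi : Pi) : R := fmax (fun th => U th pi).

Lemma lo_le (pi : Pi) (th : Theta) : lo pi <= U th pi.
Proof. by rewrite /lo lerNl; exact: (fmax_ge (fun th => - U th pi)). Qed.

Lemma le_hi (pi : Pi) (th : Theta) : U th pi <= hi pi.
Proof. exact: (fmax_ge (fun th => U th pi)). Qed.

Lemma lo_attained (pi : Pi) : exists th, lo pi = U th pi.
Proof.
have [th max_th] := fmax_attained (fun th => - U th pi) th0.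
by exists th; rewrite /lo max_th opprK.
Qed.

Lemma hi_attained (pi : Pi) : exists th, hi pi = U th pi.
Proof. exact: (fmax_attained (fun th => U th pi) th0). Qed.

(* Evaluating both regrets at an environment where m attains its maximal
   regret: the benchmark term cancels and only the utilities remain. *)
Lemma max_regret_gap (pi m : Pi) :
  exists th, max_regret U m - max_regret U pi <= U th pi - U th m.
Proof.
have [th reg_m] := fmax_attained (fun th => Regret U m th) th0.
exists th; rewrite /max_regret reg_m.
have := fmax_ge (fun th => Regret U pi th) th; rewrite /Regret; lra.
Qed.

Lemma lo_le_hi_minimax (pi m : Pi) : MinimaxRegret U m -> lo pi <= hi m.
Proof.
move=> min_m; have [th gap] := max_regret_gap m pi.
have := min_m pi; have := lo_le pi th; have := le_hi m th; lra.
Qed.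

Lemma non_minimax_below (pi m : Pi) :
  ~ MinimaxRegret U pi -> MinimaxRegret U m -> lo pi < hi m.
Proof.
move=> not_min_pi min_m.
have : ~~ minimaxb pi by apply/minimaxP.
case/forallPn => y; rewrite -ltNge => better_y.
have [th gap] := max_regret_gap m pi.
have := min_m y; have := lo_le pi th; have := le_hi m th; lra.
Qed.

End RegretComparison.

(* One-dimensional Helly property: if the intervals [lower i, upper i],
   i in P, pairwise overlap, then the smallest right endpoint lies in all
   of them. *)
Lemma common_point (R : realFieldType) (I : finType) (P : pred I)
    (lower upper : I -> R) (j0 : I) :
  P j0 -> {in P &, forall i k, lower i <= upper k} ->
  exists2 j, P j & forall i, P i -> lower i <= upper j <= upper i.
Proof.
move=> Pj0 overlap; exists [arg min_(j < j0 | P j) upper j]%O.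
  by case: arg_minP.
case: arg_minP => // j Pj min_j i Pi.
by rewrite overlap ?min_j.
Qed.

Lemma argmax_level_set (R : realFieldType) (I : finType) (F : I -> R)
    (P : I -> Prop) (c : R) (m : I) :
  P m -> (forall x, F x <= c) -> (forall x, F x = c <-> P x) ->
  forall x, is_argmax F x <-> P x.
Proof.
move=> Pm F_le_c level x; split=> [max_x|Px y].
  apply/level/le_anti; rewrite F_le_c /=.
  by rewrite -(proj2 (level m) Pm); apply: max_x.
by rewrite (proj2 (level x) Px).
Qed.

Theorem theorem4 (R : realFieldType) (Pi Theta : finType)
  (hPi : (0 < #|Pi|)%N) (hTheta : (0 < #|Theta|)%N) (U : Theta -> Pi -> R) :
  exists Lambda : Pi -> {ffun Theta -> R},
    (forall pi, is_distr (Lambda pi)) /\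
    (forall pi : Pi,
       is_argmax (fun pi' => expect (Lambda pi') (fun th => U th pi')) pi
       <-> MinimaxRegret U pi).
Proof.
case/card_gt0P: hTheta => th0 _; case/card_gt0P: hPi => p0 _.
have [m0 min_m0] := minimax_exists U p0.
have [ms /minimaxP min_ms c_common] :
    exists2 ms, minimaxb U ms &
      forall m, minimaxb U m -> lo U m <= hi U ms <= hi U m.
  apply: (common_point (introT (minimaxP U m0) min_m0)) => m1 m2 _ /minimaxP min2.
  exact: (lo_le_hi_minimax th0 m1 min2).
pose c := hi U ms.
pose target pi := if minimaxb U pi then c else lo U pi.
have target_le_c pi : target pi <= c.
  rewrite /target; case: minimaxP => // not_min.
  exact/ltW/(non_minimax_below th0 not_min min_ms).
have target_eq_c pi : target pi = c <-> MinimaxRegret U pi.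
  rewrite /target; case: minimaxP => // not_min; split=> // lo_c.
  by have := non_minimax_below th0 not_min min_ms; rewrite lo_c ltxx.
have realizable pi : exists p, is_distr p /\ expect p (fun th => U th pi) = target pi.
  have [a lo_a] := lo_attained U th0 pi; have [b hi_b] := hi_attained U th0 pi.
  rewrite /target; case: ifP => [min_pi|_].
    by apply: (realize_expectation (a := a) (b := b)); rewrite -lo_a -hi_b c_common.
  by apply: (realize_expectation (a := a) (b := a)); rewrite -lo_a lexx.
have [Lambda Lambda_spec] := fin_all_exists realizable.
exists Lambda; split=> [pi|]; first by case: (Lambda_spec pi).
apply: (argmax_level_set min_m0) => pi; rewrite (proj2 (Lambda_spec pi)).
  exact: target_le_c.
exact: target_eq_c.
Qed.
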